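(* There exists a predicate $b$ that is a super-core of some length-preserving function $f:\{0,1\}^n\to\{0,1\}^n$ computable by polynomial-size circuits if and only if there exists a super-bit $g:\{0,1\}^n\to\{0,1\}^{n+1}$.
   Context: $U_k$ is uniform on $\{0,1\}^k$. A generator $g:\{0,1\}^n\to\{0,1\}^{n+1}$ computable by polynomial-size circuits is a super-bit if for every nondeterministic polynomial-size circuit family $D$ (accepting iff some witness gives output 1), every polynomial $p$ and all sufficiently large $n$, $\Pr[D(U_{n+1})=1]-\Pr[D(g(U_n))=1]<1/p(n)$. A predicate $b$ computable by polynomial-size circuits is a super-core of $f:\{0,1\}^n\to\{0,1\}^{m(n)}$ if there do not exist a nondeterministic polynomial-size circuit family $\mathcal{A}_1$, a co-nondeterministic polynomial-size circuit family $\mathcal{A}_2$ (rejecting iff some witness gives output 0), a polynomial $p$ and infinitely many $n$ such that either $\Pr_{x\in\{0,1\}^n}[\mathcal{A}_1(f(x),1^n)=b(x)=0]+\tfrac12\Pr_{y\in\{0,1\}^{m(n)}}[\mathcal{A}_1(y,1^n)=1]\ge \tfrac12+\tfrac1{p(n)}$ or $\Pr_{x}[\mathcal{A}_2(f(x),1^n)=b(x)=1]+\tfrac12\Pr_{y}[\mathcal{A}_2(y,1^n)=0]\ge \tfrac12+\tfrac1{p(n)}$. *)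

From mathcomp Require Import all_boot all_order all_algebra.
Set Implicit Arguments. Unset Strict Implicit. Unset Printing Implicit Defensive.
Import Order.TTheory GRing.Theory Num.Theory.
Local Open Scope ring_scope.

Notation bits k := (k.-tuple bool).

Definition prob (k : nat) (P : pred (bits k)) : rat :=
  (#|[set x : bits k | P x]|)%:R / (2 ^ k)%:R.
Arguments prob k P : clear implicits.

(* Boolean circuits (fan-in <= 2, straight-line programs).             *)
(* Wires 0 .. (#inputs - 1) carry the inputs; the k-th gate produces   *)
(* the next wire.  A reference to a wire that does not (yet) exist     *)
(* reads as false.  The output is the list of values of the output     *)
(* wires.                                                              *)
Inductive gate : Type :=
| GConst of bool
| GNot of nat
| GAnd of nat & nat
| GOr of nat & nat.

Definition eval_gate (w : seq bool) (g : gate) : bool :=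
  match g with
  | GConst c => c
  | GNot i => ~~ nth false w i
  | GAnd i j => nth false w i && nth false w j
  | GOr i j => nth false w i || nth false w j
  end.

Record circuit : Type := Circuit { gates : seq gate; outs : seq nat }.

Definition eval (C : circuit) (x : seq bool) : seq bool :=
  let w := foldl (fun w g => rcons w (eval_gate w g)) x (gates C) in
  map (nth false w) (outs C).

Definition csize (C : circuit) : nat := size (gates C) + size (outs C).

Definition out1 (C : circuit) (x : seq bool) : bool := head false (eval C x).

(* A co-nondeterministic circuit rejects iff some witness gives 0,     *)
(* i.e. it accepts iff every witness gives 1.                          *)
Record ncircuit : Type := NCircuit { nc_wit : nat; nc_circ : circuit }.

Definition nsize (D : ncircuit) : nat := nc_wit D + csize (nc_circ D).

Definition nd_accepts (D : ncircuit) (x : seq bool) : bool :=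
  [exists w : bits (nc_wit D), out1 (nc_circ D) (x ++ val w)].

Definition cond_accepts (D : ncircuit) (x : seq bool) : bool :=
  [forall w : bits (nc_wit D), out1 (nc_circ D) (x ++ val w)].

(* Polynomials: rational polynomials with positive leading coefficient *)
(* (so that they are eventually positive).                             *)
Definition positive_poly (p : {poly rat}) : Prop := 0 < lead_coef p.

Definition peval (p : {poly rat}) (n : nat) : rat := p.[n%:R].

Definition eventually (P : nat -> Prop) : Prop :=
  exists N, forall n, (N <= n)%N -> P n.

Definition infinitely_often (P : nat -> Prop) : Prop :=
  forall N, exists n, (N <= n)%N /\ P n.

Definition poly_size (C : nat -> circuit) : Prop :=
  exists q, positive_poly q /\ forall n, (csize (C n))%:R <= peval q n.

Definition npoly_size (D : nat -> ncircuit) : Prop :=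
  exists q, positive_poly q /\ forall n, (nsize (D n))%:R <= peval q n.

Definition poly_computable (m : nat -> nat)
    (h : forall n, bits n -> bits (m n)) : Prop :=
  exists C : nat -> circuit, poly_size C /\
    forall n (x : bits n), eval (C n) (val x) = val (h n x).

Definition poly_computable_pred (b : forall n, bits n -> bool) : Prop :=
  exists C : nat -> circuit, poly_size C /\
    forall n (x : bits n), eval (C n) (val x) = [:: b n x].

Definition super_bit (g : forall n, bits n -> bits n.+1) : Prop :=
  @poly_computable S g /\
  forall D : nat -> ncircuit, npoly_size D ->
  forall p : {poly rat}, positive_poly p ->
  eventually (fun n =>
    prob n.+1 (fun y => nd_accepts (D n) (val y))
    - prob n (fun x => nd_accepts (D n) (val (g n x)))
    < (peval p n)^-1).

(* Super-core.  The family A(n) plays the role of A(., 1^n).           *)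
Definition super_core (m : nat -> nat) (f : forall n, bits n -> bits (m n))
    (b : forall n, bits n -> bool) : Prop :=
  poly_computable_pred b /\
  ~ exists p : {poly rat}, positive_poly p /\
     ((exists A1 : nat -> ncircuit, npoly_size A1 /\
        infinitely_often (fun n =>
          prob n (fun x => ~~ nd_accepts (A1 n) (val (f n x)) && ~~ b n x)
          + 2^-1 * prob (m n) (fun y => nd_accepts (A1 n) (val y))
          >= 2^-1 + (peval p n)^-1))
    \/
      (exists A2 : nat -> ncircuit, npoly_size A2 /\
        infinitely_often (fun n =>
          prob n (fun x => cond_accepts (A2 n) (val (f n x)) && b n x)
          + 2^-1 * prob (m n) (fun y => ~~ cond_accepts (A2 n) (val y))
          >= 2^-1 + (peval p n)^-1))).

From mathcomp Require Import all_boot all_order all_algebra.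
From mathcomp Require Import zify ring lra.
From Stdlib Require Import Classical_Prop.
Set Implicit Arguments. Unset Strict Implicit. Unset Printing Implicit Defensive.
Import Order.TTheory GRing.Theory Num.Theory.

(* A super-core b of a length-preserving f gives the super-bit x |-> b(x) f(x),
   and conversely the first bit of a super-bit g is a super-core of the rest
   of g.  Both directions rest on one probabilistic identity
   ([advantage_split]): the advantage of a test D in distinguishing b(x) f(x)
   from a uniform string equals  S0(D0) + S1(A1) - 1,  where D0 is D with
   first bit 0, A1 the complement of D with first bit 1, and S0, S1 are the
   two "prediction scores" bounded by 1/2 in the definition of a super-core.
   - core => bit: an advantage >= e forces S0(D0) or S1(A1) to reach
     1/2 + e/2, and D0, A1 are (co-)nondeterministic circuits of polynomial
     size, contradicting the super-core property;
   - bit => core: a predictor A is turned into a distinguisher whose other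
     half is trivial (score exactly 1/2), so its advantage is score - 1/2.
   The file first builds the needed circuit transformations (negation,
   fixing or or/and-ing the first input bit, parallel composition) and their
   size bounds, then the probability lemmas, and finally the two directions. *)

Definition run (gs : seq gate) (w : seq bool) : seq bool :=
  foldl (fun w g => rcons w (eval_gate w g)) w gs.

Lemma evalE (C : circuit) (x : seq bool) :
  eval C x = map (nth false (run (gates C) x)) (outs C).
Proof. by []. Qed.

Lemma run_cat (gs1 gs2 : seq gate) (w : seq bool) :
  run (gs1 ++ gs2) w = run gs2 (run gs1 w).
Proof. by rewrite /run foldl_cat. Qed.

Lemma size_run (gs : seq gate) (w : seq bool) : size (run gs w) = size w + size gs.
Proof.
elim: gs w => [|g gs IH] w /=; first by rewrite addn0.
by rewrite IH size_rcons addSnnS.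
Qed.

Lemma nth_run_old (gs : seq gate) (w : seq bool) (i : nat) :
  i < size w -> nth false (run gs w) i = nth false w i.
Proof.
elim: gs w => [|g gs IH] w //= lt_i_w.
by rewrite IH ?size_rcons ?nth_rcons ?lt_i_w // ltnS ltnW.
Qed.

Lemma nth_run_last (gs : seq gate) (g : gate) (w : seq bool) :
  nth false (run (rcons gs g) w) (size w + size gs) = eval_gate (run gs w) g.
Proof. by rewrite -cats1 run_cat /= nth_rcons size_run ltnn eqxx. Qed.

(* The single output bit, as a wire of the run (a missing output reads false). *)
Lemma out1_nth (C : circuit) (z : seq bool) :
  out1 C z = nth false (run (gates C) z) (head (size z + size (gates C)) (outs C)).
Proof.
rewrite /out1 evalE; case: (outs C) => [|o os] //=.
by rewrite nth_default // size_run.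
Qed.

Definition ren (r : nat -> nat) (g : gate) : gate :=
  match g with
  | GConst c => GConst c
  | GNot i => GNot (r i)
  | GAnd i j => GAnd (r i) (r j)
  | GOr i j => GOr (r i) (r j)
  end.

(* [r] relocates the wires of [w] inside [w']: existing wires are copied,
   wires that do not exist yet are shifted past the end of [w']. *)
Definition relocates (r : nat -> nat) (w w' : seq bool) : Prop :=
  [/\ forall i, i < size w -> r i < size w',
      forall i, i < size w -> nth false w' (r i) = nth false w i &
      forall i, size w <= i -> r i = i - size w + size w'].

Lemma relocates_nth (r : nat -> nat) (w w' : seq bool) :
  relocates r w w' -> forall j, nth false w' (r j) = nth false w j.
Proof.
case=> r_lt r_nth r_out j; case: (ltnP j (size w)) => Hj; first exact: r_nth.
by rewrite r_out // !nth_default //; lia.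
Qed.

Lemma relocates_rcons (r : nat -> nat) (w w' : seq bool) (b : bool) :
  relocates r w w' -> relocates r (rcons w b) (rcons w' b).
Proof.
case=> r_lt r_nth r_out; split=> i; rewrite !size_rcons => Hi.
- by case: (ltnP i (size w)) => [/r_lt|Hl]; [lia | rewrite r_out; lia].
- rewrite !nth_rcons; case: (ltnP i (size w)) => Hl; first by rewrite r_lt // r_nth.
  have -> : i = size w by lia.
  by rewrite r_out // subnn add0n !ltnn !eqxx.
- by rewrite r_out; lia.
Qed.

Lemma run_ren (gs : seq gate) (r : nat -> nat) (w w' : seq bool) :
  relocates r w w' ->
  forall j, nth false (run (map (ren r) gs) w') (r j) = nth false (run gs w) j.
Proof.
elim: gs w w' => [|g gs IH] w w' Hr /=; first exact: relocates_nth.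
have -> : eval_gate w' (ren r g) = eval_gate w g.
  by case: g => /= *; rewrite ?(relocates_nth Hr).
exact/IH/relocates_rcons.
Qed.

Definition negC (k : nat) (C : circuit) : circuit :=
  Circuit (rcons (gates C) (GNot (head (k + size (gates C)) (outs C))))
          [:: k + size (gates C)].

Lemma negC_out (k : nat) (C : circuit) (z : seq bool) :
  size z = k -> out1 (negC k C) z = ~~ out1 C z.
Proof.
by move=> <-; rewrite [out1 (negC _ _) _]/out1 evalE /= nth_run_last out1_nth.
Qed.

(* Hard-wire the first input bit to [c]; the result has [k] inputs. *)
Definition fix_wire (k i : nat) : nat :=
  if i == 0 then k else if i <= k then i.-1 else i.

Definition fixC (c : bool) (k : nat) (C : circuit) : circuit :=
  Circuit (GConst c :: map (ren (fix_wire k)) (gates C)) (map (fix_wire k) (outs C)).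

Lemma fixC_eval (c : bool) (k : nat) (C : circuit) (z : seq bool) :
  size z = k -> eval (fixC c k C) z = eval C (c :: z).
Proof.
move=> Hz; rewrite !evalE /= -map_comp; apply: eq_map => o /=.
apply: run_ren; split=> [[|i]|[|i]|i] /=; rewrite ?size_rcons Hz /fix_wire //=.
- by move=> Hi; rewrite (Hi : i < k) ltnW.
- by rewrite nth_rcons Hz ltnn eqxx.
- by move=> lt_ik; rewrite (lt_ik : i < k) nth_rcons Hz (lt_ik : i < k).
- by move=> Hi; rewrite ifF ?ifF; lia.
Qed.

Lemma fixC_out (c : bool) (k : nat) (C : circuit) (z : seq bool) :
  size z = k -> out1 (fixC c k C) z = out1 C (c :: z).
Proof. by move=> Hz; rewrite /out1 fixC_eval. Qed.

(* Combine the output of [C] (run on the last [k] inputs) with the first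
   input bit through the binary gate [mk]. *)
Definition frontC (mk : nat -> nat -> gate) (k : nat) (C : circuit) : circuit :=
  Circuit (rcons (map (ren succn) (gates C)) (mk (head (k + size (gates C)) (outs C)).+1 0))
          [:: k.+1 + size (gates C)].

Lemma frontC_out (mk : nat -> nat -> gate) (op : bool -> bool -> bool)
    (k : nat) (C : circuit) (c : bool) (z : seq bool) :
  (forall w i j, eval_gate w (mk i j) = op (nth false w i) (nth false w j)) ->
  size z = k -> out1 (frontC mk k C) (c :: z) = op (out1 C z) c.
Proof.
move=> mkE Hz; rewrite [out1 (frontC _ _ _) _]/out1 evalE /=.
rewrite -(size_map (ren succn)) -Hz -[_.+1 + _]/(size (c :: z) + _) nth_run_last mkE.
rewrite [X in op _ X]nth_run_old // size_map out1_nth Hz; congr (op _ _).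
by apply: (@run_ren _ succn z); split=> i //= Hi; lia.
Qed.

Lemma orC_out (k : nat) (C : circuit) (c : bool) (z : seq bool) :
  size z = k -> out1 (frontC GOr k C) (c :: z) = out1 C z || c.
Proof. exact: frontC_out. Qed.

Lemma andC_out (k : nat) (C : circuit) (c : bool) (z : seq bool) :
  size z = k -> out1 (frontC GAnd k C) (c :: z) = out1 C z && c.
Proof. exact: frontC_out. Qed.

(* Parallel composition on [n] shared inputs: the outputs of [C1] followed by
   those of [C2].  [C2] runs first; the gates of [C1] are shifted past it, and
   dangling output wires of [C2] are redirected to a wire that reads false. *)
Definition shift_wire (n d i : nat) : nat := if i < n then i else i + d.
Definition clamp_wire (a b i : nat) : nat := if i < a then i else b.

Definition parC (n : nat) (C1 C2 : circuit) : circuit :=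
  let d := size (gates C2) in
  Circuit (gates C2 ++ map (ren (shift_wire n d)) (gates C1))
    (map (shift_wire n d) (outs C1) ++
     map (clamp_wire (n + d) (n + d + size (gates C1))) (outs C2)).

Lemma parC_eval (n : nat) (C1 C2 : circuit) (x : seq bool) :
  size x = n -> eval (parC n C1 C2) x = eval C1 x ++ eval C2 x.
Proof.
move=> Hx; rewrite !evalE /= map_cat run_cat -!map_comp; congr (_ ++ _).
  apply: eq_map => o /=; apply: run_ren.
  split=> i; rewrite ?size_run Hx /shift_wire => Hi.
  - by rewrite Hi; lia.
  - by rewrite Hi nth_run_old // Hx.
  - by rewrite ifF; lia.
apply: eq_map => o /=; rewrite /clamp_wire; case: ifP => Ho.
  by rewrite nth_run_old // size_run Hx.
rewrite nth_default; last by rewrite !size_run size_map Hx.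
by rewrite nth_default // size_run Hx leqNgt Ho.
Qed.

Lemma eval_behead (C : circuit) (x : seq bool) :
  eval (Circuit (gates C) (behead (outs C))) x = behead (eval C x).
Proof. by rewrite !evalE /= behead_map. Qed.

Lemma eval_head (C : circuit) (x : seq bool) (b : bool) (s : seq bool) :
  eval C x = b :: s -> eval (Circuit (gates C) [:: head 0 (outs C)]) x = [:: b].
Proof. by rewrite !evalE /=; case: (outs C) => [|o os] //= [-> _]. Qed.

(* Apply a circuit transformation to the underlying circuit of [D], whose
   deterministic part reads [m] input bits followed by the witness. *)
Definition nlift (F : nat -> circuit -> circuit) (m : nat) (D : ncircuit) : ncircuit :=
  NCircuit (nc_wit D) (F (m + nc_wit D) (nc_circ D)).

Lemma size_witness_input (m : nat) (D : ncircuit) (y : seq bool) (w : bits (nc_wit D)) :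
  size y = m -> size (y ++ val w) = m + nc_wit D.
Proof. by move=> <-; rewrite size_cat size_tuple. Qed.

(* Bit strings of any length exist, so a constant disjunct/conjunct can be
   pulled out of a quantifier over witnesses. *)
Lemma existsb_orr (k : nat) (P : pred (bits k)) (c : bool) :
  [exists w, P w || c] = [exists w, P w] || c.
Proof.
case: c; last by rewrite orbF; apply: eq_existsb => w; rewrite orbF.
by rewrite orbT; apply/existsP; exists [tuple of nseq k false]; rewrite orbT.
Qed.

Lemma forallb_andr (k : nat) (P : pred (bits k)) (c : bool) :
  [forall w, P w && c] = [forall w, P w] && c.
Proof.
apply: negb_inj; rewrite negb_and !negb_forall -existsb_orr.
by apply: eq_existsb => w; rewrite negb_and.
Qed.

Lemma nd_negC (m : nat) (D : ncircuit) (x : seq bool) :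
  size x = m -> nd_accepts (nlift negC m D) x = ~~ cond_accepts D x.
Proof.
move=> Hx; rewrite negb_forall; apply: eq_existsb => w.
by rewrite /= negC_out //; apply: size_witness_input.
Qed.

Lemma cond_negC (m : nat) (D : ncircuit) (x : seq bool) :
  size x = m -> cond_accepts (nlift negC m D) x = ~~ nd_accepts D x.
Proof.
move=> Hx; rewrite negb_exists; apply: eq_forallb => w.
by rewrite /= negC_out //; apply: size_witness_input.
Qed.

Lemma nd_fixC (c : bool) (m : nat) (D : ncircuit) (y : seq bool) :
  size y = m -> nd_accepts (nlift (fixC c) m D) y = nd_accepts D (c :: y).
Proof.
move=> Hy; apply: eq_existsb => w.
by rewrite /= fixC_out //; apply: size_witness_input.
Qed.

Lemma nd_orC (m : nat) (D : ncircuit) (c : bool) (y : seq bool) :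
  size y = m -> nd_accepts (nlift (frontC GOr) m D) (c :: y) = nd_accepts D y || c.
Proof.
move=> Hy; rewrite /nd_accepts -existsb_orr; apply: eq_existsb => w.
by rewrite /= orC_out //; apply: size_witness_input.
Qed.

Lemma cond_andC (m : nat) (D : ncircuit) (c : bool) (y : seq bool) :
  size y = m -> cond_accepts (nlift (frontC GAnd) m D) (c :: y) = cond_accepts D y && c.
Proof.
move=> Hy; rewrite /cond_accepts -forallb_andr; apply: eq_forallb => w.
by rewrite /= andC_out //; apply: size_witness_input.
Qed.

Lemma csize_negC (k : nat) (C : circuit) : csize (negC k C) <= csize C + 2.
Proof. by rewrite /csize /= size_rcons; lia. Qed.

Lemma csize_fixC (c : bool) (k : nat) (C : circuit) : csize (fixC c k C) <= csize C + 2.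
Proof. by rewrite /csize /= !size_map; lia. Qed.

Lemma csize_frontC (mk : nat -> nat -> gate) (k : nat) (C : circuit) :
  csize (frontC mk k C) <= csize C + 2.
Proof. by rewrite /csize /= size_rcons size_map; lia. Qed.

Lemma csize_parC (n : nat) (C1 C2 : circuit) : csize (parC n C1 C2) = csize C1 + csize C2.
Proof. by rewrite /csize /= !size_cat !size_map; lia. Qed.

Local Open Scope ring_scope.

(* Sizes bounded by a polynomial with positive leading coefficient; both
   [poly_size] and [npoly_size] are instances of it. *)
Definition poly_bounded (s : nat -> nat) : Prop :=
  exists q, positive_poly q /\ forall n, (s n)%:R <= peval q n.

Lemma positive_polyD (p q : {poly rat}) :
  positive_poly p -> positive_poly q -> positive_poly (p + q).
Proof.
rewrite /positive_poly => lc_p lc_q.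
have [lt_pq|lt_qp|eq_pq] := ltngtP (size p) (size q).
- by rewrite lead_coefDr.
- by rewrite lead_coefDl.
have coef_top : (p + q)`_(size p).-1 = lead_coef p + lead_coef q.
  by rewrite coefD /lead_coef eq_pq.
have top_gt0 : 0 < (p + q)`_(size p).-1 by rewrite coef_top addr_gt0.
have size_pq : size (p + q) = size p.
  apply/eqP; rewrite eqn_leq (leq_trans (size_polyD _ _)) -?eq_pq ?maxnn //=.
  have p_neq0 : p != 0 by rewrite -lead_coef_eq0 gt_eqF.
  have size_p_gt0 : (0 < size p)%N by rewrite size_poly_gt0.
  rewrite -(prednK size_p_gt0) ltnNge.
  by apply/negP => /leq_sizeP top0; move: top_gt0; rewrite top0 // ltxx.
by rewrite /lead_coef size_pq.
Qed.

Lemma poly_bounded_add (s1 s2 s : nat -> nat) :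
  poly_bounded s1 -> poly_bounded s2 -> (forall n, (s n <= s1 n + s2 n)%N) ->
  poly_bounded s.
Proof.
move=> [q1 [q1_pos s1_le]] [q2 [q2_pos s2_le]] s_le.
exists (q1 + q2); split=> [|n]; first exact: positive_polyD.
rewrite /peval hornerD (le_trans _ (lerD (s1_le n) (s2_le n))) //.
by rewrite -natrD ler_nat.
Qed.

Lemma poly_bounded_const (c : nat) : poly_bounded (fun=> c).
Proof.
exists c.+1%:R%:P; split=> [|n]; first by rewrite /positive_poly lead_coefC ltr0n.
by rewrite /peval hornerC ler_nat.
Qed.

Lemma poly_bounded_shift (s0 s : nat -> nat) (c : nat) :
  poly_bounded s0 -> (forall n, (s n <= s0 n + c)%N) -> poly_bounded s.
Proof. by move=> bounded_s0; apply: poly_bounded_add bounded_s0 (poly_bounded_const c). Qed.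

Lemma npoly_size_nlift (F : nat -> circuit -> circuit) (c : nat) {h : nat -> nat}
    (D : nat -> ncircuit) :
  (forall k C, (csize (F k C) <= csize C + c)%N) ->
  npoly_size D -> npoly_size (fun n => nlift F (h n) (D n)).
Proof.
move=> F_le size_D; apply: (poly_bounded_shift (s0 := fun n => nsize (D n)) size_D) => n.
by rewrite /nsize /= -addnA leq_add2l.
Qed.

Lemma poly_computable_cons (m : nat -> nat) (b : forall n, bits n -> bool)
    (f : forall n, bits n -> bits (m n)) :
  poly_computable_pred b -> @poly_computable m f ->
  @poly_computable (fun n => (m n).+1) (fun n x => [tuple of b n x :: f n x]).
Proof.
move=> [Cb [size_Cb Cb_eval]] [Cf [size_Cf Cf_eval]].
exists (fun n => parC n (Cb n) (Cf n)); split.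
  by apply: poly_bounded_add size_Cb size_Cf _ => n; rewrite csize_parC.
by move=> n x; rewrite parC_eval ?size_tuple // Cb_eval Cf_eval.
Qed.

Lemma poly_computable_thead (m : nat -> nat) (g : forall n, bits n -> bits (m n).+1) :
  @poly_computable (fun n => (m n).+1) g -> poly_computable_pred (fun n x => thead (g n x)).
Proof.
move=> [C [size_C C_eval]].
exists (fun n => Circuit (gates (C n)) [:: head 0%N (outs (C n))]); split.
  by apply: (poly_bounded_shift (c := 1) size_C) => n; rewrite /csize /=; lia.
by move=> n x; apply: eval_head; rewrite C_eval [g n x]tuple_eta.
Qed.

Lemma poly_computable_behead (m : nat -> nat) (g : forall n, bits n -> bits (m n).+1) :
  @poly_computable (fun n => (m n).+1) g ->
  @poly_computable m (fun n x => [tuple of behead (g n x)]).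
Proof.
move=> [C [size_C C_eval]].
exists (fun n => Circuit (gates (C n)) (behead (outs (C n)))); split.
  by apply: (poly_bounded_shift (c := 0) size_C) => n; rewrite /csize /= size_behead; lia.
by move=> n x; rewrite eval_behead C_eval.
Qed.

Lemma prob_ext (k : nat) (P Q : pred (bits k)) : P =1 Q -> prob k P = prob k Q.
Proof. by move=> PQ; rewrite /prob (@eq_finset _ _ _ PQ). Qed.

Lemma prob_predT (k : nat) : prob k (fun=> true) = 1.
Proof.
by rewrite /prob -[[set _ | _]]/[set: bits k] cardsT card_tuple card_bool divff // pnatr_eq0 expn_eq0.
Qed.

Lemma prob_pred0 (k : nat) : prob k (fun=> false) = 0.
Proof. by rewrite /prob -[[set _ | _]]/(set0 : {set bits k}) cards0 mul0r. Qed.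

Lemma prob_predU (k : nat) (P Q : pred (bits k)) :
  (forall x, ~~ (P x && Q x)) -> prob k (fun x => P x || Q x) = prob k P + prob k Q.
Proof.
move=> disjPQ; rewrite /prob -mulrDl -natrD; congr (_%:R / _).
have -> : [set x | P x || Q x] = [set x | P x] :|: [set x | Q x].
  by apply/setP => x; rewrite !inE.
rewrite cardsU; have -> : [set x | P x] :&: [set x | Q x] = set0.
  by apply/setP => x; rewrite !inE (negbTE (disjPQ x)).
by rewrite cards0 subn0.
Qed.

Lemma card_set_sum (k : nat) (P : pred (bits k)) : #|[set x | P x]| = (\sum_x P x)%N.
Proof.
rewrite -sum1_card big_mkcond /=; apply: eq_bigr => x _.
by rewrite inE; case: (P x).
Qed.

Lemma prob_cons (k : nat) (P : pred (bits k.+1)) :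
  prob k.+1 P =
    (prob k (fun y => P [tuple of false :: y]) + prob k (fun y => P [tuple of true :: y])) / 2.
Proof.
have split_first (F : bits k.+1 -> nat) :
    (\sum_x F x = \sum_(y : bits k) F [tuple of false :: y]
                 + \sum_(y : bits k) F [tuple of true :: y])%N.
  rewrite (reindex (fun p : bool * bits k => [tuple of p.1 :: p.2])) /=.
    rewrite -(pair_big xpredT xpredT (fun a (y : bits k) => F [tuple of a :: y])) /=.
    by rewrite big_bool addnC.
  exists (fun t : bits k.+1 => (thead t, [tuple of behead t])) => [[a y] _|t _] /=.
    by rewrite theadE; congr pair; apply: val_inj.
  by rewrite -tuple_eta.
rewrite /prob !card_set_sum split_first natrD expnS natrM.
by field; rewrite pnatr_eq0 expn_eq0.
Qed.

Section Advantage.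
Variables (n m : nat) (f : bits n -> bits m) (b : bits n -> bool).

(* The two quantities that the super-core definition bounds by 1/2: how well
   a test [A] on [f x] (run as a nondeterministic, resp. co-nondeterministic,
   circuit) predicts [b x = 0], resp. [b x = 1], penalised by how often [A]
   accepts, resp. rejects, a uniform string. *)
Definition zero_score (A : pred (bits m)) : rat :=
  prob n (fun x => ~~ A (f x) && ~~ b x) + 2^-1 * prob m A.

Definition one_score (A : pred (bits m)) : rat :=
  prob n (fun x => A (f x) && b x) + 2^-1 * prob m (fun y => ~~ A y).

Lemma advantage_split (D : pred (bits m.+1)) (A0 A1 : pred (bits m)) :
  (forall y : bits m, D [tuple of false :: y] = A0 y) ->
  (forall y : bits m, D [tuple of true :: y] = ~~ A1 y) ->
  prob m.+1 D - prob n (fun x => D [tuple of b x :: f x])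
  = zero_score A0 + one_score A1 - 1.
Proof.
move=> D0 D1.
pose miss0 x := ~~ A0 (f x) && ~~ b x.
pose miss1 x := A1 (f x) && b x.
pose hit x := D [tuple of b x :: f x].
have hitE x : hit x = if b x then ~~ A1 (f x) else A0 (f x).
  by rewrite /hit; case: (b x); rewrite ?D0 ?D1.
have miss_disj x : ~~ (miss0 x && miss1 x) by rewrite /miss0 /miss1; case: (b x); rewrite !andbF.
have hit_disj x : ~~ ((miss0 x || miss1 x) && hit x).
  by rewrite hitE /miss0 /miss1; case: (b x) (A0 (f x)) (A1 (f x)) => [] [] [].
have total : prob n (fun x => (miss0 x || miss1 x) || hit x) = 1.
  rewrite -(prob_predT n); apply: prob_ext => x.
  by rewrite hitE /miss0 /miss1; case: (b x) (A0 (f x)) (A1 (f x)) => [] [] [].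
rewrite (prob_predU hit_disj) (prob_predU miss_disj) in total.
rewrite prob_cons (prob_ext D0) (prob_ext D1) /zero_score /one_score.
rewrite -/(prob n miss0) -/(prob n miss1) -/(prob n hit).
lra.
Qed.

(* A test that always accepts carries no information. *)
Lemma zero_score_predT : zero_score (fun=> true) = 2^-1.
Proof.
rewrite /zero_score (prob_ext (Q := fun=> false)) // prob_pred0 prob_predT.
by rewrite add0r mulr1.
Qed.

Lemma one_score_pred0 : one_score (fun=> false) = 2^-1.
Proof.
rewrite /one_score (prob_ext (Q := fun=> false)) // prob_pred0.
by rewrite (prob_ext (Q := fun=> true)) // prob_predT add0r mulr1.
Qed.

End Advantage.

Lemma not_eventually_io (P : nat -> Prop) :
  ~ eventually P -> infinitely_often (fun n => ~ P n).
Proof.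
move=> not_ev N; apply: NNPP => no_witness; apply: not_ev; exists N => n le_Nn.
by apply: NNPP => not_Pn; apply: no_witness; exists n.
Qed.

Lemma io_mono (P Q : nat -> Prop) :
  (forall n, P n -> Q n) -> infinitely_often P -> infinitely_often Q.
Proof. by move=> PQ io_P N; have [n [le_Nn /PQ Qn]] := io_P N; exists n. Qed.

Lemma io_or (P Q : nat -> Prop) :
  infinitely_often (fun n => P n \/ Q n) -> infinitely_often P \/ infinitely_often Q.
Proof.
move=> io_PQ; apply: NNPP => /not_or_and [not_io_P not_io_Q].
have [NP HP] : exists N, forall n, (N <= n)%N -> ~ P n.
  by apply: NNPP => H; apply: not_io_P => N; apply: NNPP => H'; apply: H;
     exists N => n le_Nn Pn; apply: H'; exists n.
have [NQ HQ] : exists N, forall n, (N <= n)%N -> ~ Q n.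
  by apply: NNPP => H; apply: not_io_Q => N; apply: NNPP => H'; apply: H;
     exists N => n le_Nn Qn; apply: H'; exists n.
have [n [le_n [Pn|Qn]]] := io_PQ (maxn NP NQ).
- by apply: (HP n) => //; apply: leq_trans le_n; apply: leq_maxl.
- by apply: (HQ n) => //; apply: leq_trans le_n; apply: leq_maxr.
Qed.

Lemma half_le_or (R : realFieldType) (x y a : R) :
  a <= x + y -> a / 2 <= x \/ a / 2 <= y.
Proof.
move=> le_a; have [le_x|lt_x] := lerP (a / 2) x; first by left.
by right; lra.
Qed.

(* 1/(2x) = (1/x)/2, used to halve the inverse-polynomial margin. *)
Lemma inv_double (R : fieldType) (x : R) : (x + x)^-1 = x^-1 / 2.
Proof. by rewrite -mulr2n -[x *+ 2]mulr_natr invfM. Qed.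

(* A super-core b of f yields the super-bit x |-> b(x) f(x): a distinguisher D
   splits into its 0-restriction D0 and the complement A2 of its
   1-restriction, and by [advantage_split] a noticeable advantage of D forces
   D0 or A2 to beat 1/2 noticeably. *)
Lemma super_bit_of_super_core (f : forall n, bits n -> bits n)
    (b : forall n, bits n -> bool) :
  @poly_computable (fun n => n) f -> @super_core (fun n => n) f b ->
  super_bit (fun n x => [tuple of b n x :: f n x]).
Proof.
move=> comp_f [comp_b no_predictor]; split; first exact: poly_computable_cons.
move=> D size_D p p_pos.
pose D0 n := nlift (fixC false) n (D n).
pose A2 n := nlift negC n (nlift (fixC true) n (D n)).
pose score0 n := zero_score (f n) (b n) (fun y => nd_accepts (D0 n) (val y)).
pose score1 n := one_score (f n) (b n) (fun y => cond_accepts (A2 n) (val y)).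
have advE n : prob n.+1 (fun y => nd_accepts (D n) (val y))
              - prob n (fun x => nd_accepts (D n) (b n x :: val (f n x)))
              = score0 n + score1 n - 1.
  by apply: advantage_split => y;
     rewrite /D0 /A2 ?cond_negC ?nd_fixC ?negbK ?size_tuple.
apply: NNPP => /not_eventually_io large_adv; apply: no_predictor.
exists (p + p); split; first exact: positive_polyD.
have e2E n : (peval (p + p) n)^-1 = (peval p n)^-1 / 2.
  by rewrite /peval hornerD inv_double.
have /io_or[io0|io1] :
    infinitely_often (fun n => 2^-1 + (peval (p + p) n)^-1 <= score0 n
                            \/ 2^-1 + (peval (p + p) n)^-1 <= score1 n).
  apply: io_mono large_adv => n /negP; rewrite -leNgt advE e2E => le_adv.
  have le_sum : 1 + (peval p n)^-1 <= score0 n + score1 n by lra.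
  by have [le0|le1] := half_le_or le_sum; [left | right]; lra.
- left; exists D0; split=> //; exact: npoly_size_nlift (csize_fixC false) size_D.
- right; exists A2; split=> //.
  exact/(npoly_size_nlift csize_negC)/(npoly_size_nlift (csize_fixC true)).
Qed.

(* Conversely, the first bit of a super-bit g is a super-core of the rest:
   a predictor A1 (resp. A2) for b(x) = 0 (resp. 1) is turned into the
   distinguisher accepting c y iff A1 y or c (resp. iff not (A2 y and c)),
   whose advantage is the predictor's score minus 1/2. *)
Lemma super_core_of_super_bit (g : forall n, bits n -> bits n.+1) :
  super_bit g ->
  @poly_computable (fun n => n) (fun n x => [tuple of behead (g n x)]) /\
  @super_core (fun n => n) (fun n x => [tuple of behead (g n x)]) (fun n x => thead (g n x)).
Proof.
move=> [comp_g small_adv].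
pose f n x : bits n := [tuple of behead (g n x)].
pose b n x := thead (g n x).
have advE n (D : ncircuit) (A0 A1 : pred (bits n)) :
    (forall y : bits n, nd_accepts D (false :: val y) = A0 y) ->
    (forall y : bits n, nd_accepts D (true :: val y) = ~~ A1 y) ->
    prob n.+1 (fun y => nd_accepts D (val y)) - prob n (fun x => nd_accepts D (val (g n x)))
    = zero_score (f n) (b n) A0 + one_score (f n) (b n) A1 - 1.
  move=> D0 D1; rewrite -(@advantage_split _ _ _ _ (fun y => nd_accepts D (val y))) //.
  by congr (_ - _); apply: prob_ext => x; rewrite [g n x in LHS]tuple_eta.
split; first exact: poly_computable_behead.
split; first exact: poly_computable_thead.
case=> p [p_pos [[A1 [size_A1 io1]] | [A2 [size_A2 io2]]]].
- pose D n := nlift (frontC GOr) n (A1 n).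
  have size_D : npoly_size D by exact: npoly_size_nlift (csize_frontC GOr) size_A1.
  have [N adv_lt] := small_adv D size_D p p_pos.
  have [n [le_Nn]] := io1 N; have := adv_lt n le_Nn.
  rewrite (advE _ _ (fun y => nd_accepts (A1 n) (val y)) (fun=> false)) ?one_score_pred0.
  + by rewrite /zero_score; lra.
  + by move=> y; rewrite nd_orC ?size_tuple ?orbF.
  + by move=> y; rewrite nd_orC ?size_tuple ?orbT.
- pose D n := nlift negC n.+1 (nlift (frontC GAnd) n (A2 n)).
  have size_D : npoly_size D.
    exact/(npoly_size_nlift csize_negC)/(npoly_size_nlift (csize_frontC GAnd)).
  have [N adv_lt] := small_adv D size_D p p_pos.
  have [n [le_Nn]] := io2 N; have := adv_lt n le_Nn.
  rewrite (advE _ _ (fun=> true) (fun y => cond_accepts (A2 n) (val y))) ?zero_score_predT.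
  + by rewrite /one_score; lra.
  + by move=> y; rewrite nd_negC ?cond_andC ?size_tuple ?andbF.
  + by move=> y; rewrite nd_negC ?cond_andC ?size_tuple ?andbT.
Qed.

Theorem theorem6p5 :
  (exists (f : forall n, bits n -> bits n) (b : forall n, bits n -> bool),
      @poly_computable (fun n => n) f /\ @super_core (fun n => n) f b)
  <->
  (exists g : forall n, bits n -> bits n.+1, super_bit g).
Proof.
split=> [[f [b [comp_f core_b]]] | [g super_g]].
- by exists (fun n x => [tuple of b n x :: f n x]); exact: super_bit_of_super_core.
- by exists (fun n x => [tuple of behead (g n x)]), (fun n x => thead (g n x));
    exact: super_core_of_super_bit.
Qed.
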